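(* Let $f:\mathbb{R}/\mathbb{Z}\to\mathbb{Z}/2\mathbb{Z}$ be defined by $f(t)=1$ if $t\in[\tfrac18,\tfrac12)\cup[\tfrac58,\tfrac34)$ and $f(t)=0$ if $t\in[0,\tfrac18)\cup[\tfrac12,\tfrac58)\cup[\tfrac34,1)$. Let $t$ be uniformly distributed on $\mathbb{R}/\mathbb{Z}$. Then for every $k\ge1$, $$\mathbb{P}\big(f(2^kt)+f(2^{k-1}t)+\cdots+f(t)=0 \text{ in } \mathbb{Z}/2\mathbb{Z}\big)=\tfrac58.$$ In particular the sum does not become equidistributed on $\mathbb{Z}/2\mathbb{Z}$ as $k\to\infty$, even though $f$ is supported neither on a proper subgroup nor on a coset of a proper subgroup. *)

(* classical reals, Riemann integral as the uniform measure on R/Z. *)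
From Stdlib Require Import Reals.
Open Scope R_scope.

Definition in_Ico (a b x : R) : bool :=
  if Rle_dec a x then (if Rlt_dec x b then true else false) else false.

(* f : R/Z -> Z/2Z, with Z/2Z encoded as bool (true = 1, false = 0);
   a real t represents its class in R/Z via its fractional part. *)
Definition f (t : R) : bool :=
  let s := frac_part t in
  in_Ico (1/8) (1/2) s || in_Ico (5/8) (3/4) s.

Fixpoint fsum (k : nat) (t : R) : bool :=
  match k with
  | O => f t
  | S k' => xorb (f (2 ^ k * t)) (fsum k' t)
  end.

Definition event_ind (k : nat) (t : R) : R :=
  if fsum k t then 0 else 1.

(** Writing [q t] for the indicator of [frac t ∈ [1/4, 1/2)], one checks
    [f t = q t + q (2t)] in Z/2Z, so the sum telescopes to [q t + q (2^(k+1) t)].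
    For [k >= 1] the integer [m = 2^(k+1)] is a multiple of 4, so on each of the
    intervals [[0,1/4)], [[1/4,1/2)], [[1/2,1)] the value [q t] is constant while
    [t ↦ q (m t)] runs through whole periods and has mean 1/4 there.  The event
    [q t = q (m t)] therefore has probability [1/4·3/4 + 1/4·1/4 + 1/2·3/4 = 5/8]. *)

From Pilot Require Import Defs.
From Stdlib Require Import Reals Lra Lia.
From Coquelicot Require Import Hierarchy RInt.
Open Scope R_scope.

Lemma frac_part_eq (x : R) (z : Z) :
  IZR z <= x < IZR z + 1 -> frac_part x = x - IZR z.
Proof.
  intros Hx. unfold frac_part, Int_part.
  assert (Hup : (z + 1)%Z = up x) by (apply tech_up; rewrite plus_IZR; lra).
  rewrite <- Hup. replace (z + 1 - 1)%Z with z by lia. reflexivity.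
Qed.

Lemma frac_part_unit (x : R) : 0 <= x < 1 -> frac_part x = x.
Proof. intros Hx. rewrite (frac_part_eq x 0); lra. Qed.

Lemma frac_part_double (x : R) :
  frac_part (2 * x) = if Rlt_dec (frac_part x) (1/2) then 2 * frac_part x
                      else 2 * frac_part x - 1.
Proof.
  destruct (base_fp x) as [Hge0 Hlt1].
  assert (Hx : x = IZR (Int_part x) + frac_part x) by (unfold frac_part; ring).
  destruct (Rlt_dec (frac_part x) (1/2)).
  - rewrite (frac_part_eq (2 * x) (2 * Int_part x)); rewrite ?mult_IZR; lra.
  - rewrite (frac_part_eq (2 * x) (2 * Int_part x + 1));
      rewrite ?plus_IZR, ?mult_IZR; lra.
Qed.

Lemma in_Ico_true (a b x : R) : a <= x < b -> in_Ico a b x = true.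
Proof.
  intros Hx. unfold in_Ico.
  destruct (Rle_dec a x); [|lra]. destruct (Rlt_dec x b); [reflexivity|lra].
Qed.

Lemma in_Ico_false (a b x : R) : x < a \/ b <= x -> in_Ico a b x = false.
Proof.
  intros Hx. unfold in_Ico.
  destruct (Rle_dec a x); [|reflexivity]. destruct (Rlt_dec x b); [lra|reflexivity].
Qed.

Definition q (t : R) : bool := in_Ico (1/4) (1/2) (frac_part t).

Lemma f_xor_double (t : R) : Defs.f t = xorb (q t) (q (2 * t)).
Proof.
  unfold Defs.f, q. rewrite frac_part_double.
  destruct (base_fp t). set (u := frac_part t) in *.
  destruct (Rlt_dec u (1/2)); unfold in_Ico;
  repeat match goal with
  | |- context [Rle_dec ?a ?b] => destruct (Rle_dec a b)
  | |- context [Rlt_dec ?a ?b] => destruct (Rlt_dec a b)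
  end; simpl; try reflexivity; lra.
Qed.

Lemma fsum_telescope (k : nat) (t : R) :
  fsum k t = xorb (q t) (q (2 ^ S k * t)).
Proof.
  induction k as [|k IH].
  - simpl. rewrite f_xor_double, Rmult_1_r. reflexivity.
  - change (fsum (S k) t) with (xorb (Defs.f (2 ^ S k * t)) (fsum k t)).
    rewrite IH, f_xor_double.
    replace (2 * (2 ^ S k * t)) with (2 ^ S (S k) * t) by (simpl; ring).
    destruct (q t), (q (2 ^ S k * t)), (q (2 ^ S (S k) * t)); reflexivity.
Qed.

Lemma is_RInt_Chasles_R (g : R -> R) (a b c l1 l2 : R) :
  is_RInt g a b l1 -> is_RInt g b c l2 -> is_RInt g a c (l1 + l2).
Proof. exact (is_RInt_Chasles g a b c l1 l2). Qed.

Lemma is_RInt_ext_open (g h : R -> R) (a b l : R) :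
  a <= b -> (forall x, a < x < b -> h x = g x) -> is_RInt h a b l -> is_RInt g a b l.
Proof.
  intros Hab Heq. apply is_RInt_ext.
  rewrite Rmin_left, Rmax_right by lra. exact Heq.
Qed.

Lemma is_RInt_const_open (g : R -> R) (a b c : R) :
  a <= b -> (forall x, a < x < b -> g x = c) -> is_RInt g a b ((b - a) * c).
Proof.
  intros Hab Hg. apply (is_RInt_ext_open _ (fun _ => c)); [exact Hab| |].
  - intros x Hx. symmetry. exact (Hg x Hx).
  - exact (is_RInt_const a b c).
Qed.

Definition frac_ind (a b t : R) : R := if in_Ico a b (frac_part t) then 1 else 0.

Section FracIndicator.

Variables a b : R.
Hypotheses (Ha : 0 <= a) (Hab : a <= b) (Hb : b <= 1).

Lemma is_RInt_frac_ind_unit (j : nat) :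
  is_RInt (frac_ind a b) (INR j) (INR j + 1) (b - a).
Proof.
  assert (Hfrac : forall x, INR j < x < INR j + 1 -> frac_part x = x - INR j).
  { intros x Hx. rewrite INR_IZR_INZ in *. apply frac_part_eq. lra. }
  replace (b - a) with ((INR j + a - INR j) * 0 + (INR j + b - (INR j + a)) * 1
                        + (INR j + 1 - (INR j + b)) * 0) by ring.
  apply (is_RInt_Chasles_R _ _ (INR j + b)); [apply (is_RInt_Chasles_R _ _ (INR j + a))|];
    apply is_RInt_const_open; try lra; intros x Hx; unfold frac_ind; rewrite Hfrac by lra.
  - rewrite in_Ico_false by lra. reflexivity.
  - rewrite in_Ico_true by lra. reflexivity.
  - rewrite in_Ico_false by lra. reflexivity.
Qed.

Lemma is_RInt_frac_ind_nat (p n : nat) :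
  is_RInt (frac_ind a b) (INR p) (INR p + INR n) (INR n * (b - a)).
Proof.
  induction n as [|n IH].
  - simpl. rewrite Rplus_0_r, Rmult_0_l. exact (is_RInt_point _ _).
  - replace (INR (S n) * (b - a)) with (INR n * (b - a) + (b - a))
      by (rewrite S_INR; ring).
    apply (is_RInt_Chasles_R _ _ (INR p + INR n)); [exact IH|].
    replace (INR p + INR n) with (INR (p + n)) by apply plus_INR.
    replace (INR p + INR (S n)) with (INR (p + n) + 1)
      by (rewrite S_INR, !plus_INR; ring).
    apply is_RInt_frac_ind_unit.
Qed.

Lemma is_RInt_frac_ind_scaled (m : R) (p n : nat) : 0 < m ->
  is_RInt (fun t => frac_ind a b (m * t)) (INR p / m) ((INR p + INR n) / m)
    (INR n * (b - a) / m).
Proof.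
  intros Hm.
  assert (Hint : is_RInt (frac_ind a b) (m * (INR p / m) + 0)
                   (m * ((INR p + INR n) / m) + 0) (INR n * (b - a))).
  { replace (m * (INR p / m) + 0) with (INR p) by (field; lra).
    replace (m * ((INR p + INR n) / m) + 0) with (INR p + INR n) by (field; lra).
    apply is_RInt_frac_ind_nat. }
  apply is_RInt_comp_lin, (is_RInt_scal _ _ _ (/ m)) in Hint.
  replace (INR n * (b - a) / m) with (/ m * (INR n * (b - a))) by (field; lra).
  revert Hint. apply is_RInt_ext. intros x _.
  change (/ m * (m * frac_ind a b (m * x + 0)) = frac_ind a b (m * x)).
  rewrite Rplus_0_r. field. lra.
Qed.

Lemma is_RInt_frac_ind_quarters (M i j : nat) : (0 < M)%nat ->
  is_RInt (fun t => frac_ind a b (4 * INR M * t)) (INR i / 4) (INR (i + j) / 4)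
    (INR j * (b - a) / 4).
Proof.
  intros HM. apply lt_0_INR in HM.
  replace (INR i / 4) with (INR (i * M) / (4 * INR M))
    by (rewrite mult_INR; field; lra).
  replace (INR (i + j) / 4) with ((INR (i * M) + INR (j * M)) / (4 * INR M))
    by (rewrite !mult_INR, plus_INR; field; lra).
  replace (INR j * (b - a) / 4) with (INR (j * M) * (b - a) / (4 * INR M))
    by (rewrite mult_INR; field; lra).
  apply is_RInt_frac_ind_scaled. lra.
Qed.

Lemma is_RInt_one_minus_frac_ind_quarters (M i j : nat) : (0 < M)%nat ->
  is_RInt (fun t => 1 - frac_ind a b (4 * INR M * t)) (INR i / 4) (INR (i + j) / 4)
    (INR j * (1 - (b - a)) / 4).
Proof.
  intros HM.
  replace (INR j * (1 - (b - a)) / 4)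
    with ((INR (i + j) / 4 - INR i / 4) * 1 - INR j * (b - a) / 4)
    by (rewrite plus_INR; field).
  exact (is_RInt_minus (fun _ => 1) _ _ _ _ _ (is_RInt_const _ _ 1)
           (is_RInt_frac_ind_quarters M i j HM)).
Qed.

End FracIndicator.

Lemma event_ind_unit (k : nat) (t : R) : 0 <= t < 1 ->
  event_ind k t = let y := frac_ind (1/4) (1/2) (2 ^ S k * t) in
                  if in_Ico (1/4) (1/2) t then y else 1 - y.
Proof.
  intros Ht. unfold event_ind, frac_ind. rewrite fsum_telescope. unfold q.
  rewrite (frac_part_unit t) by exact Ht.
  destruct (in_Ico _ _ t), (in_Ico _ _ (frac_part (2 ^ S k * t))); simpl; ring.
Qed.

Lemma is_RInt_event_ind (k M : nat) : (0 < M)%nat -> 2 ^ S k = 4 * INR M ->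
  is_RInt (event_ind k) 0 1 (5 / 8).
Proof.
  intros HM Hm.
  set (y t := frac_ind (1/4) (1/2) (4 * INR M * t)).
  assert (Hev : forall t, 0 <= t < 1 ->
            event_ind k t = if in_Ico (1/4) (1/2) t then y t else 1 - y t).
  { intros t Ht. rewrite event_ind_unit, Hm by exact Ht. reflexivity. }
  assert (Ha : 0 <= 1/4) by lra.
  assert (Hab : 1/4 <= 1/2) by lra.
  assert (Hb : 1/2 <= 1) by lra.
  replace 0 with (INR 0 / 4) by (simpl; field).
  replace 1 with (INR (2 + 2) / 4) by (simpl; field).
  replace (5 / 8) with (INR 1 * (1 - (1/2 - 1/4)) / 4 + INR 1 * (1/2 - 1/4) / 4
                        + INR 2 * (1 - (1/2 - 1/4)) / 4) by (simpl; field).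
  apply (is_RInt_Chasles_R _ _ (INR 2 / 4)); [apply (is_RInt_Chasles_R _ _ (INR 1 / 4))|].
  - apply (is_RInt_ext_open _ (fun t => 1 - y t)); [simpl; lra | |].
    + intros t Ht. simpl INR in Ht. rewrite Hev, in_Ico_false by lra. reflexivity.
    + exact (is_RInt_one_minus_frac_ind_quarters _ _ Ha Hab Hb M 0 1 HM).
  - apply (is_RInt_ext_open _ y); [simpl; lra | |].
    + intros t Ht. simpl INR in Ht. rewrite Hev, in_Ico_true by lra. reflexivity.
    + exact (is_RInt_frac_ind_quarters _ _ Ha Hab Hb M 1 1 HM).
  - apply (is_RInt_ext_open _ (fun t => 1 - y t)); [simpl; lra | |].
    + intros t Ht. simpl INR in Ht. rewrite Hev, in_Ico_false by lra. reflexivity.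
    + exact (is_RInt_one_minus_frac_ind_quarters _ _ Ha Hab Hb M 2 2 HM).
Qed.

Theorem mainTheorem14 :
  forall k : nat, (1 <= k)%nat ->
    exists pr : Riemann_integrable (event_ind k) 0 1,
      RiemannInt pr = 5 / 8.
Proof.
  intros k Hk. destruct k as [|k]; [lia|].
  assert (HI : is_RInt (event_ind (S k)) 0 1 (5 / 8)).
  { apply (is_RInt_event_ind _ (2 ^ k)).
    - apply Nat.neq_0_lt_0, Nat.pow_nonzero. lia.
    - rewrite pow_INR. replace (INR 2) with 2 by (simpl; ring). simpl. ring. }
  exists (ex_RInt_Reals_0 _ _ _ (ex_intro _ _ HI)).
  rewrite <- RInt_Reals. exact (is_RInt_unique _ _ _ _ HI).
Qed.
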